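(* For every integer $k\ge 2$, $\mathsf{{Mod_k}_{tot}P}=\mathsf{Mod_kP}$.
   Context: An NPTM is a non-deterministic polynomial-time Turing machine. For an NPTM $M$ and input $x$, $acc_M(x)$ is the number of accepting paths of $M$ on $x$ and $tot_M(x)$ is the number of all computation paths of $M$ on $x$ minus $1$. $\#\mathsf{P}=\{acc_M\}$, $\mathsf{TotP}=\{tot_M\}$ over all NPTMs $M$. $\mathsf{Mod_kP}$ is the class of languages $L$ for which there is $f\in\#\mathsf{P}$ such that $x\in L\iff f(x)\not\equiv 0\pmod{k}$. $\mathsf{{Mod_k}_{tot}P}$ is defined identically with $f\in\mathsf{TotP}$. *)

From mathcomp Require Import all_boot.
Set Implicit Arguments. Unset Strict Implicit. Unset Printing Implicit Defensive.

Inductive move := MLeft | MRight | MStay.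

(* A non-deterministic single-tape Turing machine with finitely many states
   ('I_(nQ.+1)) and finitely many tape symbols ('I_(nS.+3)); symbol 0 is the
   blank, symbols 1 and 2 encode the input bits false / true.  [delta q a] is
   the list of possible moves (each entry is one non-deterministic branch).
   A configuration with no possible move is halting; it is accepting iff its
   state is [qacc]. *)
Record NTM := {
  nQ : nat;
  nS : nat;
  delta : 'I_nQ.+1 -> 'I_nS.+3 -> seq ('I_nQ.+1 * 'I_nS.+3 * move);
  qstart : 'I_nQ.+1;
  qacc : 'I_nQ.+1 }.

Section Semantics.
Variable M : NTM.

Definition state := 'I_(nQ M).+1.
Definition symb := 'I_(nS M).+3.
(* state, left part (nearest cell first), scanned symbol, right part *)
Definition config := (state * seq symb * symb * seq symb)%type.

Definition blank : symb := ord0.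
Definition bit_sym (b : bool) : symb := inord (1 + b).

Definition apply_move (q' : state) (b : symb) (m : move)
  (l : seq symb) (r : seq symb) : config :=
  match m with
  | MLeft => match l with
             | [::] => (q', [::], blank, b :: r)
             | h :: l' => (q', l', h, b :: r)
             end
  | MRight => match r with
              | [::] => (q', b :: l, blank, [::])
              | h :: r' => (q', b :: l, h, r')
              end
  | MStay => (q', l, b, r)
  end.

Definition step (c : config) : seq config :=
  let '(q, l, a, r) := c in
  map (fun t => let '(q', b, m) := t in apply_move q' b m l r) (@delta M q a).

Definition init (x : seq bool) : config :=
  match x with
  | [::] => (@qstart M, [::], blank, [::])
  | b :: x' => (@qstart M, [::], bit_sym b, map bit_sym x')
  end.

Definition is_acc (c : config) : bool := let '(q, _, _, _) := c in q == @qacc M.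

Fixpoint halts_within (fuel : nat) (c : config) : bool :=
  match step c with
  | [::] => true
  | cs => match fuel with
          | 0 => false
          | f.+1 => all (halts_within f) cs
          end
  end.

Fixpoint count_paths (onlyacc : bool) (fuel : nat) (c : config) : nat :=
  match step c with
  | [::] => if onlyacc then is_acc c : nat else 1
  | cs => match fuel with
          | 0 => 0
          | f.+1 => sumn (map (count_paths onlyacc f) cs)
          end
  end.

End Semantics.

Definition poly_bound (c n : nat) : nat := c * n ^ c + c.

Definition polytime (M : NTM) (c : nat) : Prop :=
  forall x : seq bool, halts_within (poly_bound c (size x)) (init M x).

Definition acc_M (M : NTM) (c : nat) (x : seq bool) : nat :=
  count_paths true (poly_bound c (size x)) (init M x).
Definition tot_M (M : NTM) (c : nat) (x : seq bool) : nat :=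
  (count_paths false (poly_bound c (size x)) (init M x)).-1.

Definition SharpP (f : seq bool -> nat) : Prop :=
  exists (M : NTM) (c : nat), polytime M c /\ forall x, f x = acc_M M c x.

Definition TotP (f : seq bool -> nat) : Prop :=
  exists (M : NTM) (c : nat), polytime M c /\ forall x, f x = tot_M M c x.

Definition language := seq bool -> Prop.

Definition ModkP (k : nat) (L : language) : Prop :=
  exists f, SharpP f /\ forall x, L x <-> f x %% k != 0.

Definition ModktotP (k : nat) (L : language) : Prop :=
  exists f, TotP f /\ forall x, L x <-> f x %% k != 0.

(* Both inclusions come from one padding construction.  From M build a
   machine whose start configuration branches into a copy of M and into m
   accepting leaves, and in which every halting configuration of M is followed
   by one accepting leaf if it accepts and by w accepting leaves otherwise.
   All its paths accept, and their number is m plus the leaves of M weighted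
   by 1 or w.  With (m, w) = (k - 1, 1) this is tot_M + k, a #P function
   congruent to tot_M modulo k; with (m, w) = (1, k) its tot is congruent to
   acc_M modulo k. *)

From mathcomp Require Import all_boot.
From mathcomp Require Import zify.
Set Implicit Arguments. Unset Strict Implicit. Unset Printing Implicit Defensive.

Lemma sumn_map_mod (T : Type) (d : nat) (s : seq T) (f g : T -> nat) :
  (forall x, f x = g x %[mod d]) -> sumn (map f s) = sumn (map g s) %[mod d].
Proof. by move=> fg; elim: s => //= x s IH; rewrite -modnDm IH fg modnDm. Qed.

Section LeafSum.
Variable M : NTM.

Fixpoint leaf_sum (v : config M -> nat) (fuel : nat) (c : config M) : nat :=
  match step c with
  | [::] => v c
  | cs => match fuel with 0 => 0 | f.+1 => sumn (map (leaf_sum v f) cs) end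
  end.

Lemma leaf_sumE v fuel (c : config M) : leaf_sum v fuel c =
  match step c with
  | [::] => v c
  | cs => match fuel with 0 => 0 | f.+1 => sumn (map (leaf_sum v f) cs) end
  end.
Proof. by case: fuel. Qed.

Lemma count_pathsE b fuel (c : config M) : count_paths b fuel c =
  match step c with
  | [::] => if b then is_acc c : nat else 1
  | cs => match fuel with 0 => 0 | f.+1 => sumn (map (count_paths b f) cs) end
  end.
Proof. by case: fuel. Qed.

Lemma halts_withinE fuel (c : config M) : halts_within fuel c =
  match step c with
  | [::] => true
  | cs => match fuel with 0 => false | f.+1 => all (halts_within f) cs end
  end.
Proof. by case: fuel. Qed.

Lemma count_paths_leaf_sum b fuel (c : config M) :
  count_paths b fuel c = leaf_sum (fun c => if b then is_acc c : nat else 1) fuel c.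
Proof.
elim: fuel c => [|f IH] c; rewrite count_pathsE leaf_sumE; case: (step c) => // x s.
by congr sumn; apply: eq_map.
Qed.

Lemma leaf_sum_mod d v1 v2 fuel (c : config M) :
  (forall c, v1 c = v2 c %[mod d]) -> leaf_sum v1 fuel c = leaf_sum v2 fuel c %[mod d].
Proof.
move=> v12; elim: fuel c => [|f IH] c; rewrite !leaf_sumE; case: (step c) => // x s.
exact: sumn_map_mod.
Qed.

Lemma count_paths_gt0 fuel (c : config M) :
  halts_within fuel c -> 0 < count_paths false fuel c.
Proof.
elim: fuel c => [|f IH] c; rewrite halts_withinE count_pathsE; case: (step c) => // x s.
by move=> /andP[/IH hx _] /=; rewrite ltn_addr.
Qed.

End LeafSum.

Section Padding.
Variables (M : NTM) (m w : nat).

Definition pad_state := 'I_(nQ M).+3.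
Definition final_state : pad_state := ord_max.
Definition start_state : pad_state := inord (nQ M).+1.
Definition lift_state (q : state M) : pad_state :=
  widen_ord (leq_trans (leqnSn _) (leqnSn _)) q.
Definition leaf_weight (q : state M) : nat := if q == @qacc M then 1 else w.

Definition pad_delta (q : pad_state) (a : symb M) : seq (pad_state * symb M * move) :=
  if q < (nQ M).+1 then
    let q0 : state M := inord q in
    if @delta M q0 a is [::] then nseq (leaf_weight q0) (final_state, a, MStay)
    else map (fun t => let '(q', b, mv) := t in (lift_state q', b, mv)) (@delta M q0 a)
  else if q == start_state then
    (lift_state (@qstart M), a, MStay) :: nseq m (final_state, a, MStay)
  else [::].

Definition padded : NTM :=
  {| nQ := (nQ M).+2; nS := nS M; delta := pad_delta;
     qstart := start_state; qacc := final_state |}.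

Definition lift_config (c : config M) : config padded :=
  let '(q, l, a, r) := c in (lift_state q, l, a, r).

Definition finalize (c : config M) : config padded :=
  let '(_, l, a, r) := c in (final_state, l, a, r).

Definition config_weight (c : config M) : nat := let '(q, _, _, _) := c in leaf_weight q.

Lemma leaf_sum_weight1 fuel (c : config M) :
  w = 1 -> leaf_sum config_weight fuel c = count_paths false fuel c.
Proof.
move=> w1; rewrite count_paths_leaf_sum -[LHS]modn0 -[RHS]modn0.
by apply: leaf_sum_mod => -[[[q l] a] r]; rewrite /= /leaf_weight w1; case: ifP.
Qed.

Lemma leaf_sum_weight_mod fuel (c : config M) :
  leaf_sum config_weight fuel c = count_paths true fuel c %[mod w].
Proof.
rewrite count_paths_leaf_sum; apply: leaf_sum_mod => -[[[q l] a] r].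
by rewrite /= /leaf_weight /is_acc; case: ifP => // _; rewrite modnn mod0n.
Qed.

Lemma step_final (c : config M) : step (finalize c) = [::].
Proof.
case: c => [[[q l] a] r].
by rewrite /step /= /pad_delta /= ltnNge leqnSn -(inj_eq val_inj) /= inordK // eqn_leq ltnn.
Qed.

Lemma count_paths_final b fuel (c : config M) : count_paths b fuel (finalize c) = 1.
Proof. by rewrite count_pathsE step_final; case: b c => // -[[[q l] a] r]; rewrite /= eqxx. Qed.

Lemma halts_within_final fuel (c : config M) : halts_within fuel (finalize c).
Proof. by rewrite halts_withinE step_final. Qed.

Lemma step_lift_config (c : config M) : step (lift_config c) =
  if step c is [::] then nseq (config_weight c) (finalize c)
  else map lift_config (step c).
Proof.
case: c => [[[q l] a] r]; rewrite /step /= /pad_delta /= ltn_ord.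
have -> : (inord (lift_state q) : state M) = q by apply: val_inj; rewrite /= inordK.
case: (@delta M q a) => [|t s] /=; first by rewrite map_nseq.
rewrite -!map_comp; congr (_ :: _); first by case: t => [[q' b] []] //=; case: l; case: r.
by apply: eq_map => -[[q' b] []] /=; [case: l | case: r |].
Qed.

Lemma step_padded_init x : step (init padded x) =
  lift_config (init M x) :: nseq m (finalize (init M x)).
Proof.
have start_ge : ~~ (start_state < (nQ M).+1) by rewrite /= inordK // ltnn.
by case: x => [|b x]; rewrite /step /= /pad_delta (negbTE start_ge) eqxx /= map_nseq.
Qed.

Hypothesis w_gt0 : 0 < w.

Lemma count_paths_lift_leaf b fuel (c : config M) : step c = [::] ->
  count_paths b fuel.+1 (lift_config c) = config_weight c /\
  halts_within fuel.+1 (lift_config c).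
Proof.
move=> halt; rewrite count_pathsE halts_withinE step_lift_config halt.
have : 0 < config_weight c by case: c {halt} => [[[q l] a] r]; rewrite /= /leaf_weight; case: ifP.
case: (config_weight c) => // n _ /=.
by rewrite map_nseq sumn_nseq all_nseq !count_paths_final !halts_within_final mul1n orbT.
Qed.

(* The copy of M needs one extra step, to fan its halting configurations out. *)
Lemma count_paths_lift_config b fuel fuel' (c : config M) :
  halts_within fuel c -> fuel < fuel' ->
  count_paths b fuel' (lift_config c) = leaf_sum config_weight fuel c /\
  halts_within fuel' (lift_config c).
Proof.
elim: fuel fuel' c => [|f IH] [|g] c //; rewrite halts_withinE leaf_sumE.
  by case halt: (step c) => // _ _; apply: count_paths_lift_leaf.
case halt: (step c) => [|x s]; first by move=> _ _; apply: count_paths_lift_leaf.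
move=> /allP halt_succ; rewrite ltnS => fg.
have IHs y : y \in x :: s -> _ := fun ys => IH g y (halt_succ y ys) fg.
rewrite count_pathsE halts_withinE step_lift_config halt /= -map_comp; split.
  congr (sumn (_ :: _)); first by case: (IHs x (mem_head _ _)).
  by apply/eq_in_map => y ys; case: (IHs y (mem_behead (s := x :: s) ys)).
apply/andP; split; first by case: (IHs x (mem_head _ _)).
by apply/allP => _ /mapP[y ys ->]; case: (IHs y (mem_behead (s := x :: s) ys)).
Qed.

Lemma count_paths_padded b fuel fuel' x :
  halts_within fuel (init M x) -> fuel.+1 < fuel' ->
  count_paths b fuel' (init padded x) = leaf_sum config_weight fuel (init M x) + m /\
  halts_within fuel' (init padded x).
Proof.
case: fuel' => // g halt fg; rewrite count_pathsE halts_withinE step_padded_init /=.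
have [-> ->] := count_paths_lift_config b halt fg.
rewrite map_nseq sumn_nseq all_nseq count_paths_final halts_within_final.
by rewrite mul1n orbT.
Qed.

End Padding.

Lemma poly_bound_shift c n : (poly_bound c n).+1 < poly_bound c.+2 n.
Proof.
rewrite /poly_bound.
suff : c * n ^ c <= c.+2 * n ^ c.+2 by lia.
case: n => [|n]; first by case: c => [|c]; rewrite ?mul0n // !exp0n // !muln0.
by apply: leq_mul; [lia | apply: leq_pexp2l => //; lia].
Qed.

Section PaddedMachine.
Variables (M : NTM) (c m w : nat).
Hypotheses (w_gt0 : 0 < w) (M_poly : polytime M c).

Lemma polytime_padded : polytime (padded M m w) c.+2.
Proof. by move=> x; case: (count_paths_padded m w_gt0 false (M_poly x) (poly_bound_shift c _)). Qed.

Lemma count_paths_padded_poly b x :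
  count_paths b (poly_bound c.+2 (size x)) (init (padded M m w) x) =
  leaf_sum (config_weight w) (poly_bound c (size x)) (init M x) + m.
Proof. by case: (count_paths_padded m w_gt0 b (M_poly x) (poly_bound_shift c _)). Qed.

End PaddedMachine.

Lemma TotP_congr_SharpP k f : 0 < k -> TotP f ->
  exists2 g, SharpP g & forall x, g x = f x %[mod k].
Proof.
move=> k_gt0 [M [c [M_poly Mf]]].
exists (acc_M (padded M k.-1 1) c.+2).
  by exists (padded M k.-1 1), c.+2; split=> //; apply: polytime_padded.
move=> x; rewrite Mf /acc_M /tot_M count_paths_padded_poly // leaf_sum_weight1 //.
have := count_paths_gt0 (M_poly x).
by case: count_paths => // n _; rewrite addSnnS prednK // modnDr.
Qed.

Lemma SharpP_congr_TotP k f : 0 < k -> SharpP f ->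
  exists2 g, TotP g & forall x, g x = f x %[mod k].
Proof.
move=> k_gt0 [M [c [M_poly Mf]]].
exists (tot_M (padded M 1 k) c.+2).
  by exists (padded M 1 k), c.+2; split=> //; apply: polytime_padded.
by move=> x; rewrite Mf /acc_M /tot_M count_paths_padded_poly // addn1 leaf_sum_weight_mod.
Qed.

Theorem proposition10 (k : nat) : 2 <= k ->
  forall L : language, ModktotP k L <-> ModkP k L.
Proof.
move=> k2 L; have k_gt0 : 0 < k by apply: ltnW.
split=> -[f [Hf HL]].
- have [g Hg gf] := TotP_congr_SharpP k_gt0 Hf.
  by exists g; split=> // x; rewrite HL gf.
- have [g Hg gf] := SharpP_congr_TotP k_gt0 Hf.
  by exists g; split=> // x; rewrite HL gf.
Qed.
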